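(* Let $N\ge 1$ be an integer, let $\gamma>0$, $\upsilon\in(0,1]$, $P_b>0$, $h>0$, $T>0$, and let $p_1>p_2>\cdots>p_N>0$ with $p_1\le1$. Consider Problem P2: minimize $\sum_{k=1}^N \gamma p_k f_k^2$ over $(f_1,\dots,f_N,y_1,\dots,y_N)$ subject to $\sum_{k=1}^m \gamma f_k^2 \le \upsilon P_b h \sum_{k=1}^m y_k$ for $m=1,\dots,N$, $\sum_{k=1}^N y_k\le T$, and $f_k>0$, $\frac{1}{f_k}-y_k\le 0$ for all $k$; Problem P3: the same problem with the first $N-1$ energy harvesting constraints removed, i.e. minimize $\sum_{k=1}^N \gamma p_k f_k^2$ subject to $\sum_{k=1}^N \gamma f_k^2 \le \upsilon P_b h \sum_{k=1}^N y_k$, $\sum_{k=1}^N y_k\le T$, and $f_k>0$, $\frac{1}{f_k}-y_k\le 0$ for all $k$. Then the solution of Problem P2 can be obtained by solving Problem P3: an optimal solution of P3 is an optimal solution of P2.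
   Context: $f_k$ is the CPU frequency of the $k$-th cycle, $p_k$ the probability that the $k$-th cycle is executed (decreasing in $k$), $\gamma f^2$ the energy per cycle at frequency $f$, $\upsilon P_b h$ the harvested power and $T$ the deadline. *)

(* Cycles are indexed by k : 'I_N (0-based: ordinal k is cycle k+1). *)
From mathcomp Require Import all_boot all_order all_algebra.
Set Implicit Arguments. Unset Strict Implicit. Unset Printing Implicit Defensive.
Import Order.TTheory GRing.Theory Num.Theory.
Local Open Scope ring_scope.

Definition energy_obj (R : realFieldType) (N : nat) (gamma : R) (p f : 'I_N -> R) : R :=
  \sum_(k < N) gamma * p k * f k ^+ 2.

Definition common_constr (R : realFieldType) (N : nat) (T : R) (f y : 'I_N -> R) : Prop :=
  \sum_(k < N) y k <= T /\ (forall k : 'I_N, 0 < f k /\ (f k)^-1 - y k <= 0).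

Definition feasible_P2 (R : realFieldType) (N : nat) (gamma ups Pb h T : R)
    (f y : 'I_N -> R) : Prop :=
  (forall m : 'I_N,
      \sum_(k < N | (k <= m)%N) gamma * f k ^+ 2
        <= ups * Pb * h * \sum_(k < N | (k <= m)%N) y k)
  /\ common_constr T f y.

Definition feasible_P3 (R : realFieldType) (N : nat) (gamma ups Pb h T : R)
    (f y : 'I_N -> R) : Prop :=
  \sum_(k < N) gamma * f k ^+ 2 <= ups * Pb * h * \sum_(k < N) y k
  /\ common_constr T f y.

Definition optimal_P2 (R : realFieldType) (N : nat) (gamma ups Pb h T : R)
    (p f y : 'I_N -> R) : Prop :=
  feasible_P2 gamma ups Pb h T f y /\
  forall f' y' : 'I_N -> R, feasible_P2 gamma ups Pb h T f' y' ->
    energy_obj gamma p f <= energy_obj gamma p f'.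

Definition optimal_P3 (R : realFieldType) (N : nat) (gamma ups Pb h T : R)
    (p f y : 'I_N -> R) : Prop :=
  feasible_P3 gamma ups Pb h T f y /\
  forall f' y' : 'I_N -> R, feasible_P3 gamma ups Pb h T f' y' ->
    energy_obj gamma p f <= energy_obj gamma p f'.

(* At an optimum of P3 every cycle runs for exactly its minimal time, y_k = 1/f_k,
   since otherwise lowering f_k to 1/y_k saves energy; and f is nondecreasing,
   since otherwise swapping two cycles puts the higher frequency on the less
   probable one. Cycle k therefore draws power gamma f_k^2 / y_k = gamma f_k^3,
   nondecreasing in k, so the average power over any prefix of cycles is at most
   the average over all of them, which the single constraint of P3 bounds by the
   harvested power. Hence the P3 optimum is P2-feasible, and it is P2-optimal
   because P2 has the smaller feasible set. *)
From mathcomp Require Import all_boot all_order all_algebra all_fingroup.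
From mathcomp Require Import ring lra.
Import Order.TTheory GRing.Theory Num.Theory.
Local Open Scope ring_scope.

Lemma prefix_weighted_sum_le {R : realDomainType} {I : finType} {P : pred I}
    {r b : I -> R} {c : R} (t : R) :
  (forall k, 0 <= b k) ->
  (forall k, P k -> r k <= t) -> (forall k, ~~ P k -> t <= r k) ->
  \sum_k r k * b k <= c * \sum_k b k ->
  \sum_(k | P k) r k * b k <= c * \sum_(k | P k) b k.
Proof.
move=> b_ge0 r_le r_ge.
have bP_ge0 : 0 <= \sum_(k | P k) b k by apply: sumr_ge0.
have bN_ge0 : 0 <= \sum_(k | ~~ P k) b k by apply: sumr_ge0.
have sumP : \sum_(k | P k) r k * b k <= t * \sum_(k | P k) b k.
  by rewrite mulr_sumr; apply: ler_sum => k /r_le rk; rewrite ler_wpM2r.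
have sumN : t * \sum_(k | ~~ P k) b k <= \sum_(k | ~~ P k) r k * b k.
  by rewrite mulr_sumr; apply: ler_sum => k /r_ge rk; rewrite ler_wpM2r.
rewrite (bigID P) [X in _ * X](bigID P) /= mulrDr.
case: (lerP t c) => [tc | ct] total.
- exact: le_trans sumP (ler_wpM2r bP_ge0 tc).
- have := ler_wpM2r bN_ge0 (ltW ct); lra.
Qed.

Section Problems.

Context {R : realFieldType} {N : nat}.

Lemma energy_obj_update (gamma : R) (p f : 'I_N -> R) (k : 'I_N) (x : R) :
  energy_obj gamma p (fun l => if l == k then x else f l)
  = energy_obj gamma p f + gamma * p k * (x ^+ 2 - f k ^+ 2).
Proof.
rewrite /energy_obj (bigD1 k) //= [in RHS](bigD1 k) //= eqxx.
rewrite (eq_bigr (fun l => gamma * p l * f l ^+ 2)) => [|l /negPf -> //].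
ring.
Qed.

Lemma energy_obj_tperm (gamma : R) (p f : 'I_N -> R) (i j : 'I_N) :
  i != j ->
  energy_obj gamma p (fun l => f (tperm i j l))
  = energy_obj gamma p f - gamma * (p i - p j) * (f i ^+ 2 - f j ^+ 2).
Proof.
move=> nij; have nji : j != i by rewrite eq_sym.
rewrite /energy_obj (bigD1 i) //= (bigD1 j) //= tpermL tpermR.
rewrite [in RHS](bigD1 i) //= [in RHS](bigD1 j) //=.
rewrite (eq_bigr (fun l => gamma * p l * f l ^+ 2)) => [|l /andP [lj li]].
  ring.
by rewrite tpermD // eq_sym.
Qed.

Lemma feasible_P3_perm {gamma ups Pb h T : R} {f y : 'I_N -> R} (s : {perm 'I_N}) :
  feasible_P3 gamma ups Pb h T f y ->
  feasible_P3 gamma ups Pb h T (fun l => f (s l)) (fun l => y (s l)).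
Proof.
have s_inj : injective s := @perm_inj _ s.
move=> [energy [time cycle]]; split; last split => [|l].
- by rewrite (reindex_inj s_inj) [X in _ * X](reindex_inj s_inj) in energy.
- by rewrite (reindex_inj s_inj) in time.
- exact: cycle.
Qed.

Lemma feasible_P2_P3 {gamma ups Pb h T : R} {f y : 'I_N -> R} :
  (0 < N)%N ->
  feasible_P2 gamma ups Pb h T f y -> feasible_P3 gamma ups Pb h T f y.
Proof.
move=> N_gt0 [prefix common]; split => //.
have lastN : (N.-1 < N)%N by rewrite ltn_predL.
have whole (F : 'I_N -> R) : \sum_(k < N | (k <= Ordinal lastN)%N) F k = \sum_k F k.
  by apply: eq_bigl => k; rewrite /= -ltnS prednK // ltn_ord.
by have := prefix (Ordinal lastN); rewrite !whole.
Qed.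

End Problems.

Section OptimumP3.

Variables (R : realFieldType) (N : nat) (gamma ups Pb h T : R) (p f y : 'I_N -> R).
Hypothesis gamma_gt0 : 0 < gamma.
Hypothesis p_gt0 : forall k, 0 < p k.
Hypothesis opt : optimal_P3 gamma ups Pb h T p f y.

Let feas : feasible_P3 gamma ups Pb h T f y := opt.1.

Let f_gt0 k : 0 < f k.
Proof. by have [_ [_ /(_ k) []]] := feas. Qed.

Lemma optimal_P3_time k : y k = (f k)^-1.
Proof.
have [[energy [time cycle]] minimal] := opt.
have [_ yk_ge] := cycle k.
case: (ltrgtP (y k) (f k)^-1) => // [|yk_gt]; first lra.
have finv_gt0 : 0 < (f k)^-1 by rewrite invr_gt0.
have yinv_gt0 : 0 < (y k)^-1 by rewrite invr_gt0 (lt_trans finv_gt0).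
have yinv_lt : (y k)^-1 < f k.
  by rewrite -[f k]invrK ltf_pV2 // posrE (lt_trans finv_gt0).
have sq_lt : (y k)^-1 ^+ 2 < f k ^+ 2 by rewrite ltr_pXn2r // nnegrE ltW.
pose f' l := if l == k then (y k)^-1 else f l.
have feas' : feasible_P3 gamma ups Pb h T f' y.
  split; last split => // [l]; rewrite /f'.
  - apply: le_trans energy; apply: ler_sum => l _.
    by case: eqP => [-> | _] //; rewrite ler_wpM2l ?ltW.
  - by case: eqP => [-> | _]; [rewrite invrK subrr | exact: cycle].
have := minimal _ _ feas'; rewrite energy_obj_update.
have : 0 < gamma * p k * (f k ^+ 2 - (y k)^-1 ^+ 2) by rewrite !mulr_gt0 ?subr_gt0.
lra.
Qed.

Hypothesis p_decr : forall i j : 'I_N, (i < j)%N -> p j < p i.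

Lemma optimal_P3_nondecreasing (i j : 'I_N) : (i <= j)%N -> f i <= f j.
Proof.
rewrite leq_eqVlt => /predU1P [/val_inj -> // | ij].
rewrite leNgt; apply/negP => fji.
have nij : i != j by rewrite -(inj_eq val_inj) /= ltn_eqF.
have := opt.2 _ _ (feasible_P3_perm (tperm i j) feas).
rewrite energy_obj_tperm //.
have sq_lt : f j ^+ 2 < f i ^+ 2 by rewrite ltr_pXn2r // nnegrE ltW.
have : 0 < gamma * (p i - p j) * (f i ^+ 2 - f j ^+ 2).
  by rewrite !mulr_gt0 // subr_gt0 ?p_decr.
lra.
Qed.

Lemma optimal_P3_feasible_P2 : feasible_P2 gamma ups Pb h T f y.
Proof.
have [energy common] := feas; split => // m.
have power k : gamma * f k ^+ 2 = gamma * f k ^+ 3 * y k.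
  by rewrite optimal_P3_time; field; rewrite gt_eqF.
rewrite !(eq_bigr _ (fun k _ => power k)) in energy *.
have cube_le (k l : 'I_N) : (k <= l)%N -> gamma * f k ^+ 3 <= gamma * f l ^+ 3.
  move=> kl; have fk_ge0 := ltW (f_gt0 k); have fl_ge0 := ltW (f_gt0 l).
  by rewrite ler_pM2l // ler_pXn2r ?nnegrE // optimal_P3_nondecreasing.
apply: (prefix_weighted_sum_le (gamma * f m ^+ 3)) energy => [k|k|k].
- by rewrite optimal_P3_time invr_ge0 ltW.
- exact: cube_le.
- by rewrite -ltnNge => /ltnW; apply: cube_le.
Qed.

End OptimumP3.

Theorem lemma3 (R : realFieldType) (N : nat) (gamma ups Pb h T : R)
    (p : 'I_N -> R) :
  (1 <= N)%N ->
  0 < gamma -> 0 < ups -> ups <= 1 -> 0 < Pb -> 0 < h -> 0 < T ->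
  (forall i j : 'I_N, (i < j)%N -> p j < p i) ->
  (forall k : 'I_N, 0 < p k) ->
  (forall k : 'I_N, nat_of_ord k = 0%N -> p k <= 1) ->
  forall f y : 'I_N -> R,
    optimal_P3 gamma ups Pb h T p f y -> optimal_P2 gamma ups Pb h T p f y.
Proof.
move=> N_gt0 gamma_gt0 _ _ _ _ _ p_decr p_gt0 _ f y opt.
split; first exact: optimal_P3_feasible_P2 gamma_gt0 p_gt0 opt p_decr.
by move=> f' y' /(feasible_P2_P3 N_gt0); apply: opt.2.
Qed.
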